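(* Let $\tau(\lambda)$ denote Kendall's tau of the power-divergence copula $C_\lambda$, i.e. $\tau(\lambda)=1+4\int_0^1 \phi_\lambda(s)/\phi_\lambda'(s)\,ds$; explicitly $\tau(\lambda)=1+\frac{2}{\lambda+1}-\frac{4\lambda}{\lambda+1}\int_0^1\frac{s-1}{s^\lambda-1}\,ds$ for $\lambda\ne-1,0$, $\tau(0)=3-4\log 2$, $\tau(-1)=7-2\pi^2/3$. Then $\tau$ is a monotone non-increasing function of $\lambda\in(-\infty,\infty)$.
   Context: For $\lambda\in\mathbb{R}$ define $\phi_\lambda$ on $[0,\infty)$ by $\phi_\lambda(x)=\frac{1}{\lambda(\lambda+1)}(x^{\lambda+1}-x+\lambda(1-x))$ for $\lambda\neq-1,0$; $\phi_0(x)=1-x+x\log x$; $\phi_{-1}(x)=x-1-\log x$; values at $x=0$ are limits, so $\phi_\lambda(0)=1/(\lambda+1)$ for $\lambda>-1$ and $\phi_\lambda(0)=\infty$ for $\lambda\le-1$. On $[0,1]$, $\phi_\lambda$ is convex, strictly decreasing, $\phi_\lambda(1)=0$. The pseudoinverse is $\phi_\lambda^{[-1]}(t)=\phi_\lambda^{-1}(t)$ (inverse of $\phi_\lambda|_{[0,1]}$) for $0\le t<\phi_\lambda(0)$ and $0$ for $t\ge\phi_\lambda(0)$. The power-divergence (PD) copula is $C_\lambda(u_1,u_2)=\phi_\lambda^{[-1]}(\phi_\lambda(u_1)+\phi_\lambda(u_2))$, $u_1,u_2\in[0,1]$ (with $\phi_\lambda^{[-1]}(\infty)=0$). Kendall's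 tau of a copula $C$ is the population Kendall's tau of a random vector with distribution $C$. *)

From HB Require Import structures.
From mathcomp Require Import all_boot all_order all_algebra.
From mathcomp Require Import all_classical all_reals all_analysis.
Set Implicit Arguments. Unset Strict Implicit. Unset Printing Implicit Defensive.
Import Order.TTheory GRing.Theory Num.Theory.
Import numFieldNormedType.Exports.
Local Open Scope classical_set_scope.
Local Open Scope ring_scope.

(* Power-divergence generator phi_lambda on (0, oo) (the values at 0 are
   irrelevant for the integral below). *)
Definition pd_phi {R : realType} (l : R) (x : R) : R :=
  if l == 0 then 1 - x + x * ln x
  else if l == -1 then x - 1 - ln x
  else (x `^ (l + 1) - x + l * (1 - x)) / (l * (l + 1)).

Definition pd_tau {R : realType} (l : R) : R :=
  1 + 4 * Rintegral (@lebesgue_measure R) `]0, 1[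
            (fun s : R => pd_phi l s / derive1 (pd_phi l) s).

From HB Require Import structures.
From mathcomp Require Import all_boot all_order all_algebra.
From mathcomp Require Import all_classical all_reals all_analysis.
From mathcomp Require Import ring lra.
Set Implicit Arguments. Unset Strict Implicit. Unset Printing Implicit Defensive.
Import Order.TTheory GRing.Theory Num.Theory.
Import numFieldNormedType.Exports.
Local Open Scope ring_scope.

(* Substituting s = exp (- t), the integrand of Kendall's tau becomes
   phi(s) / phi'(s) = s - I_{l+1}(t) / I_l(t) with I_m(t) = int_0^t exp(- m x) dx
   (= [int_expN m t]),
   so it suffices that the ratio I_{a+1}(t) / I_a(t) is non-decreasing in a.
   For a <= b = a + c let m := I_{a+1}(t) / I_a(t) and
   H := I_{b+1} - m I_b - m^c (I_{a+1} - m I_a).  Then H(0) = 0, H(t) =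
   I_{b+1}(t) - m I_b(t), and H' = e^{-ax} (e^{-cx} - m^c) (e^{-x} - m) >= 0
   because both factors change sign at the same point x = - ln m. *)

Section ExpIntegral.
Variable R : realType.

Definition int_expN (m t : R) : R :=
  if m == 0 then t else (1 - expR (- (m * t))) / m.

Lemma is_derive_int_expN (m t : R) :
  is_derive t (1 : R) (int_expN m) (expR (- (m * t))).
Proof.
rewrite /int_expN; have [->|m0] := eqVneq m 0.
  by rewrite mul0r oppr0 expR0; exact: is_derive_id.
have hN : is_derive t (1 : R) (fun x : R => - (m * x)) (- m).
  apply: (is_derive_eq (f := fun x : R => - (m * x))
                       (is_deriveN (is_deriveZ m (is_derive_id t 1)))).
  by rewrite /GRing.scale /= mulr1.
have hE := is_deriveB (is_derive_cst (1 : R) t 1) (is_derive1_comp (is_derive_expR _) hN).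
have -> : (fun x => (1 - expR (- (m * x))) / m) =
          m^-1 *: (cst 1 - (expR \o (fun x : R => - (m * x)))).
  by apply/funext => x /=; rewrite mulrC.
apply: (is_derive_eq (is_deriveZ m^-1 hE)).
by rewrite /GRing.scale /=; field.
Qed.

Lemma int_expN0 (m : R) : int_expN m 0 = 0.
Proof. by rewrite /int_expN mulr0 oppr0 expR0 subrr mul0r; case: ifP. Qed.

Lemma int_expN_gt0 (m t : R) : 0 < t -> 0 < int_expN m t.
Proof.
move=> t0; rewrite /int_expN; have [//|m0] := eqVneq m 0.
have [mlt|mgt] := ltrP m 0.
  have -> : (1 - expR (- (m * t))) / m = (expR (- (m * t)) - 1) / (- m) by field.
  by apply: divr_gt0; [rewrite subr_gt0 expR_gt1; nra | rewrite oppr_gt0].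
have mp : 0 < m by rewrite lt_neqAle eq_sym m0 mgt.
by apply: divr_gt0 => //; rewrite subr_gt0 expR_lt1; nra.
Qed.

Lemma derive_ge0_le (f df : R -> R) (a b : R) : a <= b ->
  (forall x, is_derive x (1 : R) f (df x)) ->
  (forall x, a < x < b -> 0 <= df x) -> f a <= f b.
Proof.
move=> ab hd hpos; apply: (@ger0_derive1_ndecr R f a b) => //.
- move=> x; rewrite in_itv /= => hx.
  by rewrite derive1E (@derive_val _ _ _ _ _ _ _ (hd x)); exact: hpos.
- apply: derivable_within_continuous => x _.
  exact: (@ex_derive _ _ _ _ _ _ _ (hd x)).
Qed.

Lemma int_expN_succ_le (l t : R) : 0 <= t -> int_expN (l + 1) t <= int_expN l t.
Proof.
move=> t0; have := derive_ge0_le t0 (fun x => is_deriveB (is_derive_int_expN l x)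
                                                    (is_derive_int_expN (l + 1) x)).
rewrite !fctE !int_expN0 subrr subr_ge0; apply.
by move=> x /andP[x0 _]; rewrite subr_ge0 ler_expR lerN2 mulrDl mul1r lerDl ltW.
Qed.

Lemma expR_cross_ge0 (c m x : R) : 0 < c -> 0 < m ->
  0 <= (expR (- (c * x)) - m `^ c) * (expR (- x) - m).
Proof.
move=> c0 m0; rewrite /powR gt_eqF // mulrC.
have em : m = expR (ln m) by rewrite lnK.
have [h|h] := lerP (- x) (ln m).
  have hc : - (c * x) <= c * ln m by rewrite -mulrN ler_pM2l.
  by apply: mulr_le0; rewrite subr_le0 ?ler_expR // em ler_expR.
have hc : c * ln m <= - (c * x) by rewrite -mulrN ler_pM2l // ltW.
by apply: mulr_ge0; rewrite subr_ge0 ?ler_expR // em ler_expR ltW.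
Qed.

Lemma is_derive_int_expN_comb (a c m q x : R) :
  is_derive x (1 : R)
    (fun y => int_expN (a + c + 1) y - m * int_expN (a + c) y
              - q * (int_expN (a + 1) y - m * int_expN a y))
    (expR (- (a * x)) * ((expR (- (c * x)) - q) * (expR (- x) - m))).
Proof.
have hD m' := is_deriveB (is_derive_int_expN (m' + 1) x)
                         (is_deriveZ m (is_derive_int_expN m' x)).
apply: (is_derive_eq (f := fun y => int_expN (a + c + 1) y - m * int_expN (a + c) y
                               - q * (int_expN (a + 1) y - m * int_expN a y))
                     (is_deriveB (hD (a + c)) (is_deriveZ q (hD a)))).
have eD (u v : R) : expR (- ((u + v) * x)) = expR (- (u * x)) * expR (- (v * x)).
  by rewrite -expRD; congr expR; ring.
by rewrite /GRing.scale /= (eD (a + c) 1) (eD a c) (eD a 1) mul1r; ring.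
Qed.

Lemma int_expN_ratio_le (a b t : R) : a <= b -> 0 < t ->
  int_expN (a + 1) t / int_expN a t <= int_expN (b + 1) t / int_expN b t.
Proof.
rewrite le_eqVlt => /predU1P[-> //|ab] t0.
set m := int_expN (a + 1) t / int_expN a t.
have m0 : 0 < m by apply: divr_gt0; exact: int_expN_gt0.
have Ia : int_expN (a + 1) t - m * int_expN a t = 0.
  by rewrite /m mulrAC -mulrA divff ?mulr1 ?subrr // gt_eqF // int_expN_gt0.
have := derive_ge0_le (ltW t0)
  (fun x => is_derive_int_expN_comb a (b - a) m (m `^ (b - a)) x).
rewrite addrCA subrr addr0 !int_expN0 !(mulr0, subrr) Ia mulr0 subr0 => H.
rewrite ler_pdivlMr ?int_expN_gt0 // -subr_ge0; apply: H => x _.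
by apply: mulr_ge0; [exact: expR_ge0 | apply: expR_cross_ge0; rewrite ?subr_gt0].
Qed.

End ExpIntegral.

Section PowerDivergence.
Variable R : realType.

Definition pd_dphi (l s : R) : R :=
  if l == 0 then ln s else if l == -1 then 1 - s^-1 else (s `^ l - 1) / l.

Lemma is_derive_pd_phi (l s : R) : 0 < s -> is_derive s (1 : R) (pd_phi l) (pd_dphi l s).
Proof.
move=> s0; rewrite /pd_dphi; have [l0|l0] := eqVneq l 0.
  have -> : pd_phi l = cst 1 - id + id * @ln R.
    by apply/funext => y; rewrite /pd_phi l0 eqxx.
  apply: (is_derive_eq (is_deriveD (is_deriveB (is_derive_cst (1 : R) s 1)
      (is_derive_id s 1)) (is_deriveM (is_derive_id s 1) (is_derive1_ln s0)))).
  by rewrite /GRing.scale /= mulr1 mulfV ?gt_eqF //; ring.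
have [l1|l1] := eqVneq l (-1).
  have -> : pd_phi l = id - cst 1 - @ln R.
    by apply/funext => y; rewrite /pd_phi (negbTE l0) l1 eqxx.
  apply: (is_derive_eq (is_deriveB (is_deriveB (is_derive_id s 1)
      (is_derive_cst (1 : R) s 1)) (is_derive1_ln s0))).
  by ring.
have l10 : l + 1 != 0 by rewrite addr_eq0.
have -> : pd_phi l = (l * (l + 1))^-1 *: (((@powR R)^~ (l + 1)) - id + l *: (cst 1 - id)).
  by apply/funext => y; rewrite /pd_phi (negbTE l0) (negbTE l1) /= [RHS]mulrC.
apply: (is_derive_eq (is_deriveZ _ (is_deriveD
  (is_deriveB (is_derive1_powR (l + 1) s0) (is_derive_id s 1))
  (is_deriveZ l (is_deriveB (is_derive_cst (1 : R) s 1) (is_derive_id s 1)))))).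
rewrite /GRing.scale /= addrK; field.
by rewrite l0 l10.
Qed.

Lemma in_itv_oo01 (s : R) : `]0, 1[%classic s -> 0 < s < 1.
Proof. by rewrite /= in_itv. Qed.

Definition pd_quot (l s : R) : R :=
  s - int_expN (l + 1) (- ln s) / int_expN l (- ln s).

Lemma lnN_gt0 (s : R) : 0 < s < 1 -> 0 < - ln s.
Proof. by move=> s01; rewrite oppr_gt0 ln_lt0. Qed.

Lemma pd_phi_div_derive (l s : R) : 0 < s < 1 ->
  pd_phi l s / derive1 (pd_phi l) s = pd_quot l s.
Proof.
move=> s01; have /andP[s0 s1] := s01.
have lsn : ln s != 0 by rewrite -oppr_eq0 gt_eqF // lnN_gt0.
have sn : s != 0 by rewrite gt_eqF.
have els : expR (ln s) = s by rewrite lnK.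
rewrite derive1E (@derive_val _ _ _ _ _ _ _ (is_derive_pd_phi l s0)).
rewrite /pd_dphi /pd_phi /pd_quot /int_expN.
have [->|l0] := eqVneq l 0.
  by rewrite add0r oner_eq0 mul1r divr1 opprK els; field.
have [->|l1] := eqVneq l (-1).
  rewrite addNr eqxx mulN1r opprK expRN els.
  by field; rewrite sn subr_eq0 lt_eqF.
have l10 : l + 1 != 0 by rewrite addr_eq0.
rewrite (negbTE l10) /powR (negbTE sn) !mulrN !opprK.
set e := expR (l * ln s).
have -> : expR ((l + 1) * ln s) = e * s by rewrite mulrDl mul1r expRD els.
have e1 : e - 1 != 0.
  by rewrite subr_eq0 /e -expR0 (inj_eq (@expR_inj R)) mulf_eq0 negb_or l0.
by field; rewrite l0 l10 e1 -oppr_eq0 opprB e1.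
Qed.

Lemma pd_quot_norm_le1 (l s : R) : 0 < s < 1 -> `|pd_quot l s| <= 1.
Proof.
move=> s01; have /andP[s0 s1] := s01; have t0 := lnN_gt0 s01.
have q0 : 0 < int_expN (l + 1) (- ln s) / int_expN l (- ln s).
  by apply: divr_gt0; exact: int_expN_gt0.
have q1 : int_expN (l + 1) (- ln s) / int_expN l (- ln s) <= 1.
  by rewrite ler_pdivrMr ?int_expN_gt0 // mul1r int_expN_succ_le // ltW.
rewrite /pd_quot ler_norml; apply/andP; split; lra.
Qed.

Lemma pd_quot_le (l1 l2 s : R) : l1 <= l2 -> 0 < s < 1 -> pd_quot l2 s <= pd_quot l1 s.
Proof.
by move=> l12 s01; rewrite /pd_quot lerD2l lerN2 int_expN_ratio_le ?lnN_gt0.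
Qed.

Lemma pd_quot_continuous (l s : R) : 0 < s < 1 -> {for s, continuous (pd_quot l)}.
Proof.
move=> s01; have /andP[s0 _] := s01.
have hlnN := is_deriveN (is_derive1_ln s0).
have hI m := is_derive1_comp (is_derive_int_expN m _) hlnN.
have I0 : (int_expN l \o -%R \o @ln R) s != 0 by rewrite gt_eqF ?int_expN_gt0 ?lnN_gt0.
have -> : pd_quot l = id - (int_expN (l + 1) \o -%R \o @ln R) *
                            (fun y => (int_expN l (- ln y))^-1) by [].
apply: differentiable_continuous; rewrite -derivable1_diffP.
exact: (@ex_derive _ _ _ _ _ _ _
  (is_deriveB (is_derive_id s 1) (is_deriveM (hI (l + 1)) (is_deriveV I0 (hI l))))).
Qed.

Lemma pd_phi_div_derive_integrable (l : R) : (@lebesgue_measure R).-integrable `]0, 1[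
  (EFin \o (fun s => pd_phi l s / derive1 (pd_phi l) s)).
Proof.
apply: measurable_bounded_integrable.
- exact: measurable_itv.
- by rewrite /= lebesgue_measure_itv /= lte01 ltry.
- apply: (eq_measurable_fun (pd_quot l)).
    by move=> s; rewrite inE => /in_itv_oo01/pd_phi_div_derive ->.
  apply: measurable_realfun.open_continuous_measurable_fun; first exact: itv_open.
  by move=> s; rewrite inE => /in_itv_oo01 hs; exact: pd_quot_continuous.
- exists 1; split => // M M1 s /in_itv_oo01 hs /=.
  by rewrite pd_phi_div_derive // (le_trans (pd_quot_norm_le1 l hs)) // ltW.
Qed.

End PowerDivergence.

Theorem proposition4 (R : realType) (l1 l2 : R) :
  l1 <= l2 -> pd_tau l2 <= pd_tau l1.
Proof.
move=> l12; rewrite /pd_tau lerD2l ler_pM2l; last by rewrite ltr0n.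
apply: le_Rintegral.
- exact: measurable_itv.
- exact: pd_phi_div_derive_integrable.
- exact: pd_phi_div_derive_integrable.
- by move=> s /in_itv_oo01 hs; rewrite !pd_phi_div_derive // pd_quot_le.
Qed.
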